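(* Let $S,T\subseteq(\Sigma\cup\Gamma)^*$ be regular languages of finite shiftlag. Then $\mathit{minsync}(S,T)$ is regular if and only if $\mathit{allsync}(S,T)$ is regular.
   Context: $\Sigma,\Gamma$ are disjoint finite alphabets. For $w\in(\Sigma\cup\Gamma)^*$, $\llbracket w\rrbracket=(\pi_{\mathtt i}(w),\pi_{\mathtt o}(w))$ where $\pi_{\mathtt i}$ (resp. $\pi_{\mathtt o}$) deletes all letters of $\Gamma$ (resp. $\Sigma$), and $\llbracket L\rrbracket=\{\llbracket w\rrbracket:w\in L\}$. A position $i$ of $w$ is $\geq k$-lagged if the absolute difference between the numbers of $\Sigma$-letters and $\Gamma$-letters in $w[1..i]$ is at least $k$. A shift of $w$ is a position $i\in\{1,\dots,|w|-1\}$ with exactly one of $w[i],w[i+1]$ in $\Sigma$; shifts $i<j$ are consecutive if no shift lies strictly between them. $\mathit{shift}(w)$ is the number of shifts; $\mathit{shiftlag}(w)$ is the maximal $n$ such that $w$ contains $n$ consecutive shifts all $\geq n$-lagged. A language has finite shift (resp. finite shiftlag) if the supremum of $\mathit{shift}$ (resp. $\mathit{shiftlag}$) over its words is finite; $\mathrm{Reg}_{\mathsf{FS}}$ denotes the class of regular languages of finite shift. For $x\in(\Sigma\cup\Gamma)^*$, $x^{-1}T=\{z: xz\in T\}$, and $w[1,i]$ is the prefix of $w$ of length $i$. For $w,w'\in T$ with $\llbracket w\rrbracket=\llbracket w'\rrbracket$, write $w\preceq_T w'$ if for all $i\le|w|$, $(w'[1,i])^{-1}T\in\mathrm{Reg}_{\mathsf{FS}}$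 implies $(w[1,i])^{-1}T\in\mathrm{Reg}_{\mathsf{FS}}$. Define $\mathit{minsync}(S,T)=\{w\in T:\llbracket w\rrbracket\in\llbracket S\rrbracket,\ w\preceq_T w'\text{ for all }w'\in T\text{ with }\llbracket w'\rrbracket=\llbracket w\rrbracket\}$ and $\mathit{allsync}(S,T)=\{w\in T:\llbracket w\rrbracket\in\llbracket S\rrbracket\}$. *)

From mathcomp Require Import all_boot.
Set Implicit Arguments. Unset Strict Implicit. Unset Printing Implicit Defensive.

Section Defs.
Variables (Sigma Gamma : finType).
Definition letter := (Sigma + Gamma)%type.
Definition word := seq letter.
Definition lang := word -> Prop.

Definition regular (L : lang) : Prop :=
  exists (Q : finType) (q0 : Q) (delta : Q -> letter -> Q) (F : pred Q),
    forall w : word, L w <-> F (foldl delta q0 w).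

Definition isSigma (a : letter) : bool := if a is inl _ then true else false.
Definition pi_i (w : word) : seq Sigma :=
  pmap (fun a : letter => if a is inl x then Some x else None) w.
Definition pi_o (w : word) : seq Gamma :=
  pmap (fun a : letter => if a is inr y then Some y else None) w.
Definition sem (w : word) : seq Sigma * seq Gamma := (pi_i w, pi_o w).
Definition in_sem (L : lang) (p : seq Sigma * seq Gamma) : Prop :=
  exists w, L w /\ sem w = p.

Definition absdiff (a b : nat) : nat := (a - b) + (b - a).
(* lag of position i (1-based): |#Sigma - #Gamma| in w[1..i] *)
Definition lag (w : word) (i : nat) : nat :=
  absdiff (count isSigma (take i w)) (count (predC isSigma) (take i w)).
Definition lagged (w : word) (k i : nat) : bool := k <= lag w i.

Definition sigma_at (w : word) (i : nat) : bool := nth false (map isSigma w) i.-1.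
Definition shifts (w : word) : seq nat :=
  [seq i <- iota 1 (size w).-1 | sigma_at w i != sigma_at w i.+1].
Definition shift (w : word) : nat := size (shifts w).

(* w contains n consecutive shifts, all >= n-lagged: a contiguous block of
   length n of the (sorted) list of shifts *)
Definition has_shiftlag (w : word) (n : nat) : Prop :=
  exists s : seq nat, [/\ infix s (shifts w), size s = n & all (lagged w n) s].

(* shiftlag(w) = max n with has_shiftlag w n; finiteness of the supremum over
   L is expressed by a uniform bound on all such n *)
Definition finite_shiftlag (L : lang) : Prop :=
  exists N, forall w n, L w -> has_shiftlag w n -> n <= N.
Definition finite_shift (L : lang) : Prop :=
  exists N, forall w, L w -> shift w <= N.

Definition RegFS (L : lang) : Prop := regular L /\ finite_shift L.

Definition lquot (x : word) (T : lang) : lang := fun z => T (x ++ z).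

Definition precT (T : lang) (w w' : word) : Prop :=
  forall i, i <= size w ->
    RegFS (lquot (take i w') T) -> RegFS (lquot (take i w) T).

Definition minsync (S T : lang) : lang := fun w =>
  T w /\ in_sem S (sem w) /\
  (forall w', T w' -> sem w' = sem w -> precT T w w').

Definition allsync (S T : lang) : lang := fun w => T w /\ in_sem S (sem w).

End Defs.

From mathcomp Require Import all_boot boolp zify.
Set Implicit Arguments. Unset Strict Implicit. Unset Printing Implicit Defensive.

(* A position of a word of T is synchronised when the residual of T by the prefix read so
   far is regular with finite shift; minsync keeps, among the words of T with a given
   semantics, those synchronising earliest. Before a word of T synchronises, its lag is at
   most the number of states of a DFA for T: otherwise a loop with unequal numbers of input
   and output letters could be pumped into a word of T of unbounded shiftlag. So a word w and
   a witness m with the same semantics can be read in parallel, with bounded delays between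
   their projections, up to the first synchronisation point of m; after it the remainder of m
   has bounded shift, and the remainders of w compatible with it form a finite union of
   products of regular languages. Hence, for every regular L, the words w having a witness m
   in L that synchronises no later (or strictly earlier) than w, or such that neither ever
   synchronises, form regular languages. allsync is T intersected with the union of the
   non-strict and the never-synchronising languages for L = minsync, and minsync is allsync
   minus the strict one for L = T. *)

Lemma foldl_map (A B R : Type) (f : R -> B -> R) (g : A -> B) z s :
  foldl f z (map g s) = foldl (fun r x => f r (g x)) z s.
Proof. by elim: s z => //= a s IH z. Qed.

Lemma ex_minn_prop (P : nat -> Prop) n : P n -> exists k, P k /\ forall j, P j -> k <= j.
Proof.
move=> Pn; have exP : exists n, `[< P n >] by exists n; apply/asboolP.
by case: (ex_minnP exP) => k /asboolP Pk min_k; exists k; split=> // j /asboolP/min_k.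
Qed.

Section RegularSeq.
Variable A : Type.
Implicit Types (L : seq A -> Prop) (s u v w : seq A).

(* [regular] of the statement is [regular_seq] over [letter]; languages of inputs and of
   outputs need the general alphabet. *)
Definition regular_seq L := exists (Q : finType) (q0 : Q) (d : Q -> A -> Q) (F : pred Q),
  forall w, L w <-> F (foldl d q0 w).

Lemma eq_regular_seq L1 L2 :
  (forall w, L1 w <-> L2 w) -> regular_seq L1 -> regular_seq L2.
Proof.
by move=> E [Q [q0 [d [F HL]]]]; exists Q, q0, d, F => w; rewrite -E.
Qed.

Fixpoint nfa_run (Q : Type) (tr : Q -> A -> Q -> Prop) q w q' : Prop :=
  if w is a :: w then exists2 q1, tr q a q1 & nfa_run tr q1 w q' else q = q'.

Lemma nfa_run_rcons (Q : Type) (tr : Q -> A -> Q -> Prop) q w a q' :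
  nfa_run tr q (rcons w a) q' <-> exists2 q1, nfa_run tr q w q1 & tr q1 a q'.
Proof.
elim: w q => [|b w IH] q /=.
  by split=> [[q1 tr_q1 <-]|[_ <- tr_q]]; [exists q | exists q'].
split=> [[q1 tr_q1 /IH [q2 run_q2 tr_q2]]|[q2 [q1 tr_q1 run_q1] tr_q2]].
  by exists q2 => //; exists q1.
by exists q1 => //; apply/IH; exists q2.
Qed.

Lemma nfa_regular_seq (Q : finType) (I : Q -> Prop) (tr : Q -> A -> Q -> Prop)
    (F : Q -> Prop) L :
  (forall w, L w <-> exists q q', [/\ I q, nfa_run tr q w q' & F q']) ->
  regular_seq L.
Proof.
move=> HL.
pose d (X : {set Q}) a := [set q' | [exists q in X, `[< tr q a q' >]]].
have reach w X q' : q' \in foldl d X w <-> exists2 q, q \in X & nfa_run tr q w q'.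
  elim/last_ind: w q' => [|w a IH] q' /=; first by split=> [|[q ? <-]]; first exists q'.
  rewrite foldl_rcons inE; split.
    case/existsP=> q /andP[/IH[q0 X_q0 run_q] /asboolP tr_q].
    by exists q0 => //; apply/nfa_run_rcons; exists q.
  case=> q0 X_q0 /nfa_run_rcons[q run_q tr_q].
  apply/existsP; exists q; apply/andP; split; last exact/asboolP.
  by apply/IH; exists q0.
exists {set Q}, [set q | `[< I q >]], d, (fun X : {set Q} => [exists q in X, `[< F q >]]).
move=> w.
rewrite HL; split.
  case=> q [q' [I_q run_q F_q']]; apply/existsP; exists q'.
  by rewrite asboolT // andbT; apply/reach; exists q; rewrite // inE asboolT.
case/existsP=> q' /andP[/reach[q] + run_q /asboolP F_q'].
by rewrite inE => /asboolP I_q; exists q, q'.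
Qed.

Lemma regularC L : regular_seq L -> regular_seq (fun w => ~ L w).
Proof.
move=> [Q [q0 [d [F HL]]]]; exists Q, q0, d, (predC F) => w /=.
by rewrite HL; split=> /negP.
Qed.

Lemma foldl_pair (Q1 Q2 : Type) (d1 : Q1 -> A -> Q1) (d2 : Q2 -> A -> Q2) q1 q2 w :
  foldl (fun q a => (d1 q.1 a, d2 q.2 a)) (q1, q2) w = (foldl d1 q1 w, foldl d2 q2 w).
Proof. by elim: w q1 q2 => //= a w IH q1 q2; rewrite IH. Qed.

Lemma regularI L1 L2 :
  regular_seq L1 -> regular_seq L2 -> regular_seq (fun w => L1 w /\ L2 w).
Proof.
move=> [Q1 [q1 [d1 [F1 H1]]]] [Q2 [q2 [d2 [F2 H2]]]].
exists (Q1 * Q2)%type, (q1, q2), (fun q a => (d1 q.1 a, d2 q.2 a)),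
  (fun q => F1 q.1 && F2 q.2) => w.
by rewrite foldl_pair H1 H2; split=> /andP.
Qed.

Lemma regularU L1 L2 :
  regular_seq L1 -> regular_seq L2 -> regular_seq (fun w => L1 w \/ L2 w).
Proof.
move=> [Q1 [q1 [d1 [F1 H1]]]] [Q2 [q2 [d2 [F2 H2]]]].
exists (Q1 * Q2)%type, (q1, q2), (fun q a => (d1 q.1 a, d2 q.2 a)),
  (fun q => F1 q.1 || F2 q.2) => w.
by rewrite foldl_pair H1 H2; split=> /orP.
Qed.

Lemma regular0 : regular_seq (fun _ => False).
Proof. by exists bool, true, (fun q _ => q), pred0. Qed.

Lemma regular_guard (P : Prop) L :
  (P -> regular_seq L) -> regular_seq (fun w => P /\ L w).
Proof.
case: (pselect P) => [HP HL|nP _].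
  by apply: eq_regular_seq (HL HP) => w; split=> [|[]].
by apply: eq_regular_seq regular0 => w; split=> [|[]].
Qed.

Lemma regular_exists (I : finType) (L : I -> seq A -> Prop) :
  (forall i, regular_seq (L i)) -> regular_seq (fun w => exists i, L i w).
Proof.
move=> HL.
suff /(_ (enum I)) : forall r : seq I, regular_seq (fun w => exists2 i, i \in r & L i w).
  by apply: eq_regular_seq => w; split=> [[i _ Li]|[i Li]]; exists i; rewrite ?mem_enum.
elim=> [|i r IH]; first by apply: eq_regular_seq regular0 => w; split=> // [[]].
apply: eq_regular_seq (regularU (HL i) IH) => w; split.
  case=> [Li|[j r_j Lj]]; first by exists i; rewrite ?mem_head.
  by exists j; rewrite ?inE ?r_j ?orbT.
by case=> j; rewrite inE => /orP[/eqP-> Li|r_j Lj]; [left | right; exists j].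
Qed.

Lemma regular_lquot L s : regular_seq L -> regular_seq (fun w => L (s ++ w)).
Proof.
by move=> [Q [q0 [d [F HL]]]]; exists Q, (foldl d q0 s), d, F => w; rewrite HL foldl_cat.
Qed.

Lemma rcons_eq_cat s a u v :
  rcons s a = u ++ v <->
  (u = rcons s a /\ v = [::]) \/ exists2 v', v = rcons v' a & s = u ++ v'.
Proof.
case/lastP: v => [|v' b]; rewrite ?cats0 -?rcons_cat.
  by split=> [<-|[[->]|[v' /(congr1 size)]]] //; [left | rewrite size_rcons].
split=> [/rcons_inj[-> ->]|[[_ /(congr1 size)]|[v'' /rcons_inj[<- <-] ->]]] //.
  by right; exists v'.
by rewrite size_rcons.
Qed.

Lemma regular_cat L1 L2 : regular_seq L1 -> regular_seq L2 ->
  regular_seq (fun w => exists u v, [/\ w = u ++ v, L1 u & L2 v]).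
Proof.
move=> [Q1 [i1 [d1 [F1 H1]]]] [Q2 [i2 [d2 [F2 H2]]]].
pose start q1 : {set Q2} := if F1 q1 then [set i2] else set0.
pose d (q : Q1 * {set Q2}) a := (d1 q.1 a, (d2^~ a) @: q.2 :|: start (d1 q.1 a)).
have run1 w : (foldl d (i1, start i1) w).1 = foldl d1 i1 w.
  by elim/last_ind: w => //= w a IH; rewrite !foldl_rcons /= IH.
have run2 w q : q \in (foldl d (i1, start i1) w).2 <->
    exists u v, [/\ w = u ++ v, F1 (foldl d1 i1 u) & q = foldl d2 i2 v].
  elim/last_ind: w q => [|w a IH] q.
    split=> [|[u [v [E F_u ->]]]]; last first.
      by case: u v E F_u => [|//] [|//] _ /= F_i1; rewrite /start F_i1 inE.
    by rewrite /start; case: ifP => [F_i1|]; rewrite ?inE // => /eqP->; exists [::], [::].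
  rewrite foldl_rcons inE /start run1 -foldl_rcons; split.
    case/orP=> [/imsetP[q' /IH[u [v [-> F_u ->]]] ->]|].
      by exists u, (rcons v a); rewrite rcons_cat foldl_rcons.
    case: ifP => [F_w|]; rewrite ?inE // => /eqP->.
    by exists (rcons w a), [::]; rewrite cats0.
  case=> u [v [/rcons_eq_cat[[-> ->] | [v' -> Ew]] F_u ->]].
    by rewrite F_u inE eqxx orbT.
  rewrite foldl_rcons; apply/orP; left; apply/imsetP.
  by exists (foldl d2 i2 v') => //; apply/IH; exists u, v'.
exists (Q1 * {set Q2})%type, (i1, start i1), d.
exists (fun q : Q1 * {set Q2} => [exists q2 in q.2, F2 q2]) => w.
split=> [[u [v [-> /H1 F_u /H2 F_v]]]|/existsP[q /andP[/run2[u [v [-> F_u ->]]] F_v]]].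
  by apply/existsP; exists (foldl d2 i2 v); rewrite F_v andbT; apply/run2; exists u, v.
by exists u, v; split; [| apply/H1 | apply/H2].
Qed.

Lemma regular_letter a : regular_seq (fun w => w = [:: a]).
Proof.
pose tr q b q' := [/\ ~~ q, b = a & q'].
apply: (nfa_regular_seq (I := negb) (tr := tr) (F := id)) => w.
split=> [->|[q [q' [nq run_q Fq']]]]; first by exists false, true; split=> //; exists true.
case: w run_q => [/= Eq|b [|c w]]; first by rewrite Eq Fq' in nq.
  by case=> q1 [_ -> ->].
by case=> q1 [_ _ ->] [q2 []].
Qed.

Lemma regular_word s : regular_seq (fun w => w = s).
Proof.
elim: s => [|a s IH].
  exists bool, true, (fun _ _ => false), id => w.
  have -> : foldl (fun _ _ => false) true w = nilp w by case: w => //= b w; elim: w.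
  by split=> [->|/nilP].
apply: eq_regular_seq (regular_cat (regular_letter a) IH) => w.
by split=> [[u [v [-> -> ->]]]|->]; last exists [:: a], s.
Qed.

Lemma regular_prefix L s :
  regular_seq L -> regular_seq (fun w => exists2 v, w = s ++ v & L v).
Proof.
move=> HL; apply: eq_regular_seq (regular_cat (regular_word s) HL) => w.
by split=> [[u [v [-> -> Lv]]]|[v -> Lv]]; [exists v | exists s, v].
Qed.

Lemma foldl_nseq_loop (Q : Type) (d : Q -> A -> Q) q y k :
  foldl d q y = q -> foldl d q (flatten (nseq k y)) = q.
Proof. by move=> loop; elim: k => //= k IH; rewrite foldl_cat loop. Qed.

Lemma dfa_loop (Q : finType) (d : Q -> A -> Q) q x : #|Q| < size x ->
  exists x1 y x2,
    [/\ x = x1 ++ y ++ x2, 0 < size y & foldl d (foldl d q x1) y = foldl d q x1].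
Proof.
move=> ltQx; pose f (i : 'I_#|Q|.+1) := foldl d q (take i x).
have /injectivePn[i [j ne_ij eq_f]] : ~~ injectiveb f.
  by apply/negP => /injectiveP/leq_card; rewrite card_ord ltnn.
wlog lt_ij : i j ne_ij eq_f / i < j.
  move=> W; case: (ltngtP i j) => [|gt_ij|eq_ij]; first exact: W.
    by apply: (W j i) => //; rewrite eq_sym.
  by rewrite (val_inj eq_ij) eqxx in ne_ij.
exists (take i x), (drop i (take j x)), (drop j x); split.
- by rewrite catA -{1}(take_takel x (ltnW lt_ij)) !cat_take_drop.
- by rewrite size_drop size_take (leq_trans (ltn_ord j)) ?subn_gt0.
- by rewrite -foldl_cat -{1}(take_takel x (ltnW lt_ij)) cat_take_drop.
Qed.

End RegularSeq.

Section Words.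
Variables Sigma Gamma : finType.
Local Notation letter := (letter Sigma Gamma).
Local Notation word := (word Sigma Gamma).
Local Notation isS := (@isSigma Sigma Gamma).
Implicit Types (a : letter) (m u w x y z : word).

Lemma shifts_cons a w : shifts (a :: w) =
  (if w is b :: _ then (if isS a != isS b then [:: 1] else [::]) else [::])
  ++ map S (shifts w).
Proof.
rewrite /shifts /=; case: w => [|b w] //=.
rewrite -[2]/(1 + 1) iotaDl filter_map /=.
rewrite (@eq_in_filter _ _ (fun i => sigma_at (b :: w) i != sigma_at (b :: w) i.+1)).
  by case: ifP.
by move=> [|i] //; rewrite mem_iota.
Qed.

Lemma shift_cons a w :
  shift (a :: w) = (if w is b :: _ then (isS a != isS b : nat) else 0) + shift w.
Proof.
rewrite /shift shifts_cons size_cat size_map.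
by case: w => [|b w] //=; case: (isS a != isS b).
Qed.

Lemma shifts_cat x z : exists P, shifts (x ++ z) = P ++ map (addn (size x)) (shifts z).
Proof.
elim: x => [|a x [P HP]] /=; first by exists [::]; rewrite (eq_map add0n) map_id.
rewrite shifts_cons HP map_cat -map_comp catA.
by eexists; congr (_ ++ _); apply: eq_map => i /=; rewrite addSn.
Qed.

Lemma leq_shift_cat x z : shift z <= shift (x ++ z).
Proof. by have [P HP] := shifts_cat x z; rewrite /shift HP size_cat size_map leq_addl. Qed.

Lemma pi_i_cat u v : pi_i (u ++ v) = pi_i u ++ pi_i v.
Proof. exact: pmap_cat. Qed.

Lemma pi_o_cat u v : pi_o (u ++ v) = pi_o u ++ pi_o v.
Proof. exact: pmap_cat. Qed.

Lemma size_pi_i w : size (pi_i w) = count isS w.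
Proof. by elim: w => [|[x|y] w IH] //=; rewrite IH. Qed.

Lemma size_pi_o w : size (pi_o w) = count (predC isS) w.
Proof. by elim: w => [|[x|y] w IH] //=; rewrite IH. Qed.

Lemma semP m w : sem m = sem w <-> pi_i m = pi_i w /\ pi_o m = pi_o w.
Proof. by split=> [[-> ->]|[Ei Eo]]; rewrite /sem ?Ei ?Eo. Qed.

Lemma sem_size m w : sem m = sem w -> size m = size w.
Proof.
move/semP=> [Ei Eo]; rewrite -(count_predC isS m) -(count_predC isS w).
by rewrite -!size_pi_i -!size_pi_o Ei Eo.
Qed.

Definition imbalance w := absdiff (count isS w) (count (predC isS) w).

Lemma imbalance_le_size w : imbalance w <= size w.
Proof. by rewrite /imbalance /absdiff -(count_predC isS w); lia. Qed.

Lemma lag_succ w i : lag w i.+1 <= (lag w i).+1.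
Proof.
rewrite /lag -addn1 takeD !count_cat.
have := count_predC isS (take 1 (drop i w)).
have : size (take 1 (drop i w)) <= 1 by rewrite size_take; case: ltnP.
rewrite /absdiff; lia.
Qed.

Lemma count_flatten_nseq (p : pred letter) k y :
  count p (flatten (nseq k y)) = k * count p y.
Proof. by rewrite count_flatten map_nseq sumn_nseq mulnC. Qed.

Lemma imbalance_pump x1 y x2 k n :
  count isS y != count (predC isS) y -> n + size x1 + size x2 < k ->
  n < imbalance (x1 ++ flatten (nseq k y) ++ x2).
Proof.
move=> neq_y lt_k; rewrite /imbalance !count_cat !count_flatten_nseq /absdiff.
have := count_size isS x1; have := count_size (predC isS) x1.
have := count_size isS x2; have := count_size (predC isS) x2.
case: (ltngtP (count isS y) (count (predC isS) y)) neq_y => // lt_y _.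
  have := leq_mul2l k (count isS y).+1 (count (predC isS) y).
  by rewrite lt_y orbT mulnS; lia.
have := leq_mul2l k (count (predC isS) y).+1 (count isS y).
by rewrite lt_y orbT mulnS; lia.
Qed.

Lemma has_shiftlag_catr x z n : n <= shift z ->
  (forall t, t <= size z -> n <= lag (x ++ z) (size x + t)) -> has_shiftlag (x ++ z) n.
Proof.
move=> le_n_z lag_n; exists (map (addn (size x)) (take n (shifts z))); split.
- have [P ->] := shifts_cat x z; apply: infix_catl.
  by rewrite -{2}(cat_take_drop n (shifts z)) map_cat prefix_infix.
- by rewrite size_map size_takel.
apply/allP => _ /mapP[t /mem_take t_z ->]; apply: lag_n.
by move: t_z; rewrite mem_filter mem_iota => /andP[_]; case: (size z) => //= ?; lia.
Qed.

End Words.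

Section Residuals.
Variables Sigma Gamma : finType.
Local Notation letter := (letter Sigma Gamma).
Local Notation word := (word Sigma Gamma).
Local Notation lang := (lang Sigma Gamma).
Local Notation isS := (@isSigma Sigma Gamma).
Implicit Types (w x y z : word) (T : lang).

Definition regfs_residual T x := RegFS (lquot x T).

Lemma regfs_residual_cat T x y : regfs_residual T x -> regfs_residual T (x ++ y).
Proof.
move=> [reg_xT [N shift_xT]]; split.
  by apply: eq_regular_seq (regular_lquot y reg_xT) => z; rewrite /lquot catA.
by exists N => z; rewrite /lquot -catA => /shift_xT; apply: leq_trans (leq_shift_cat _ _).
Qed.

Lemma regfs_residual_take T w i j :
  i <= j -> regfs_residual T (take i w) -> regfs_residual T (take j w).
Proof.
by move=> le_ij /(regfs_residual_cat (take (j - i) (drop i w))); rewrite -takeD subnKC.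
Qed.

Definition finite_shift_from (Q : finType) (d : Q -> letter -> Q) (F : pred Q) q :=
  finite_shift (fun z => F (foldl d q z)).

Lemma regfs_residualE (Q : finType) (q0 : Q) d (F : pred Q) T :
  (forall w, T w <-> F (foldl d q0 w)) ->
  forall x, regfs_residual T x <-> finite_shift_from d F (foldl d q0 x).
Proof.
move=> HT x; split=> [[_ [N shift_xT]]|[N shift_q]].
  by exists N => z F_z; apply: shift_xT; rewrite /lquot HT foldl_cat.
split; first by exists Q, (foldl d q0 x), d, F => z; rewrite /lquot HT foldl_cat.
by exists N => z; rewrite /lquot HT foldl_cat => /shift_q.
Qed.

Lemma lagE w i : lag w i = imbalance (take i w).
Proof. by []. Qed.

Section LagBound.
Variables (Q : finType) (q0 : Q) (d : Q -> letter -> Q) (F : pred Q) (N : nat).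
Hypothesis shiftlag_le : forall w n, F (foldl d q0 w) -> has_shiftlag w n -> n <= N.

(* A long word contains a loop of the automaton. A balanced loop can be cut out; an
   unbalanced one, pumped often enough, makes all of the more than N shifts of a continuation
   accepted from the non-Reg_FS state (N+1)-lagged. *)
Lemma imbalance_le_card x : ~ finite_shift_from d F (foldl d q0 x) -> imbalance x <= #|Q|.
Proof.
move=> nfs; have [z [F_z lt_N_z]] : exists z, F (foldl d (foldl d q0 x) z) /\ N < shift z.
  apply: contrapT => nz; apply: nfs; exists N => z F_z; rewrite leqNgt.
  by apply/negP => lt_N_z; apply: nz; exists z.
move q_x: (foldl d q0 x) F_z => q F_z; clear nfs.
have [n] := ubnP (size x); elim: n x q_x => // n IH x q_x /ltnSE le_x_n.
rewrite leqNgt; apply/negP => lt_card.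
have /(dfa_loop d q0)[x1 [y [x2 [Ex y_gt0 loop]]]] := leq_trans lt_card (imbalance_le_size x).
have q_x1x2 : foldl d q0 (x1 ++ x2) = q by rewrite -q_x Ex !foldl_cat loop.
case: (eqVneq (count isS y) (count (predC isS) y)) => [bal_y|unbal_y].
  have lt_x1x2 : size (x1 ++ x2) < n by move: le_x_n; rewrite Ex !size_cat; lia.
  suff: #|Q| < imbalance (x1 ++ x2) by rewrite ltnNge (IH _ q_x1x2 lt_x1x2).
  by move: lt_card; rewrite Ex /imbalance !count_cat bal_y /absdiff; lia.
have [k lt_k] : {k | N + size x1 + size x2 + size z < k}.
  by exists (N + size x1 + size x2 + size z).+1.
pose xk := x1 ++ flatten (nseq k y) ++ x2.
have q_xk : foldl d q0 xk = q by rewrite -q_x Ex !foldl_cat foldl_nseq_loop ?loop.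
suff /(shiftlag_le (w := xk ++ z)) : has_shiftlag (xk ++ z) N.+1.
  by rewrite foldl_cat q_xk ltnn => /(_ F_z).
apply: has_shiftlag_catr => // t le_t_z.
rewrite lagE takeD take_size_cat // drop_size_cat // /xk -!catA.
apply: imbalance_pump unbal_y _; rewrite size_cat.
have : size (take t z) <= size z by rewrite size_take_min geq_minr.
lia.
Qed.

End LagBound.
End Residuals.

Section Delay.
Variable X : eqType.
Implicit Types (p q s u : seq X) (t : bool * seq X).

Definition delay p1 p2 t := if t.1 then p1 = p2 ++ t.2 else p2 = p1 ++ t.2.

Definition resolves t q1 q2 := if t.1 then t.2 ++ q1 = q2 else q1 = t.2 ++ q2.

Definition swap t := (~~ t.1, t.2).

(* [None] when the extended words are no longer comparable for the prefix order. *)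
Definition pushl t s : option (bool * seq X) :=
  if t.1 then Some (true, t.2 ++ s)
  else if prefix s t.2 then Some (false, drop (size s) t.2)
  else if prefix t.2 s then Some (true, drop (size t.2) s)
  else None.

Definition pushr t s := omap swap (pushl (swap t) s).

Definition push t s1 s2 := obind (pushr^~ s2) (pushl t s1).

Lemma delay_swap p1 p2 t : delay p1 p2 t <-> delay p2 p1 (swap t).
Proof. by case: t => [[] r]. Qed.

Lemma delay_pushl p1 p2 t s t' :
  delay p1 p2 t -> pushl t s = Some t' -> delay (p1 ++ s) p2 t'.
Proof.
case: t => [[] r] /= ->; rewrite /pushl /=; first by case=> <-; rewrite /delay /= catA.
case: ifPn => [/prefixP[r' ->] [<-]|_]; first by rewrite /delay /= drop_size_cat // catA.
by case: ifPn => [/prefixP[s' ->] [<-]|//]; rewrite /delay /= drop_size_cat // catA.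
Qed.

Lemma delay_pushr p1 p2 t s t' :
  delay p1 p2 t -> pushr t s = Some t' -> delay p1 (p2 ++ s) t'.
Proof.
move=> /delay_swap/delay_pushl D; rewrite /pushr.
case E: pushl => [t1|] //= [<-]; apply/delay_swap.
by case: t1 E => [b r] /D; rewrite /swap negbK.
Qed.

Lemma delay_push p1 p2 t s1 s2 t' :
  delay p1 p2 t -> push t s1 s2 = Some t' -> delay (p1 ++ s1) (p2 ++ s2) t'.
Proof.
rewrite /push => D; case E: pushl => [t1|] //= /delay_pushr; apply.
exact: delay_pushl E.
Qed.

Lemma prefix_total u s1 s2 : prefix s1 u -> prefix s2 u -> prefix s1 s2 || prefix s2 s1.
Proof.
wlog le12 : s1 s2 / size s1 <= size s2.
  move=> W P1 P2; case: (leqP (size s1) (size s2)) => [le12|/ltnW le21]; first exact: W.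
  by rewrite orbC W.
rewrite !prefixE => /eqP E1 /eqP E2.
by rewrite -{1}E2 take_takel // E1 eqxx.
Qed.

Lemma pushl_defined p1 p2 t s u :
  delay p1 p2 t -> prefix (p1 ++ s) u -> prefix p2 u -> exists t', pushl t s = Some t'.
Proof.
case: t => [[] r] /= ->; rewrite /pushl /=; first by eexists.
move=> P1; have /prefixP[u' Eu] := catl_prefix P1; move: P1.
rewrite Eu !prefix_catr // eqxx /= => Ps Pr.
by case/orP: (prefix_total Ps Pr) => ->; [|case: ifP]; eexists.
Qed.

Lemma push_defined p1 p2 t s1 s2 u : delay p1 p2 t ->
  prefix (p1 ++ s1) u -> prefix (p2 ++ s2) u -> exists t', push t s1 s2 = Some t'.
Proof.
move=> D P1 P2; have [t1 E1] := pushl_defined D P1 (catl_prefix P2).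
have /delay_swap D1 := delay_pushl D E1.
have [t2 E2] := pushl_defined D1 P2 P1.
by rewrite /push E1 /= /pushr E2; eexists.
Qed.

Lemma size_delay p1 p2 t : delay p1 p2 t -> size t.2 = absdiff (size p1) (size p2).
Proof. by case: t => [[] r] /= ->; rewrite size_cat /absdiff /=; lia. Qed.

Lemma delay_resolves p1 p2 t q1 q2 :
  delay p1 p2 t -> p1 ++ q1 = p2 ++ q2 <-> resolves t q1 q2.
Proof.
case: t => [[] r] /= ->; rewrite /resolves /= -catA.
  by split=> [/eqP|<-] //; rewrite eqseq_cat // eqxx => /eqP.
by split=> [/eqP|->] //; rewrite eqseq_cat // eqxx => /eqP.
Qed.

Lemma delay_nil p1 p2 t : t.2 = [::] -> delay p1 p2 t -> p1 = p2.
Proof. by case: t => [[] r] /= ->; rewrite /delay /= cats0 => ->. Qed.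

End Delay.

Section SyncRun.
Variables Sigma Gamma : finType.
Local Notation letter := (letter Sigma Gamma).
Local Notation word := (word Sigma Gamma).
Implicit Types (a b : letter) (m w : word).

Lemma projection_gap_le w m i K : size m = size w -> lag w i <= K -> lag m i <= K ->
  absdiff (size (pi_i (take i w))) (size (pi_i (take i m))) <= K /\
  absdiff (size (pi_o (take i w))) (size (pi_o (take i m))) <= K.
Proof.
move=> eq_size; rewrite /lag !size_pi_i !size_pi_o.
have := count_predC (@isSigma Sigma Gamma) (take i w).
have := count_predC (@isSigma Sigma Gamma) (take i m).
rewrite !size_take eq_size /absdiff; case: ltnP => _; lia.
Qed.

Variables (QM : finType) (m0 : QM) (dM : QM -> letter -> QM) (stopM : QM -> Prop).
Variables (QW : finType) (w0 : QW) (dW : QW -> letter -> QW) (stopW : QW -> Prop).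
Variable K : nat.

(* States of the two automata reading [m] and [w], and the delays between the input and the
   output projections of the prefixes read so far. *)
Definition sync_state := (QM * QW * (bool * K.-bseq Sigma) * (bool * K.-bseq Gamma))%type.
Implicit Types (c : sync_state).

Definition sync_m c := c.1.1.1.
Definition sync_w c := c.1.1.2.
Definition sync_dI c : bool * seq Sigma := (c.1.2.1, val c.1.2.2).
Definition sync_dO c : bool * seq Gamma := (c.2.1, val c.2.2).

(* Reading the letter [a] of the word [w] while guessing the letter [b] of the word [m]. *)
Definition sync_step c a c' :=
  [/\ ~ stopM (sync_m c), ~ stopW (sync_w c) & exists b,
    [/\ sync_m c' = dM (sync_m c) b, sync_w c' = dW (sync_w c) a,
        push (sync_dI c) (pi_i [:: a]) (pi_i [:: b]) = Some (sync_dI c') &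
        push (sync_dO c) (pi_o [:: a]) (pi_o [:: b]) = Some (sync_dO c')]].

Definition sync_init c :=
  [/\ sync_m c = m0, sync_w c = w0, (sync_dI c).2 = [::] & (sync_dO c).2 = [::]].

Definition sync_reach c w := exists2 c0, sync_init c0 & nfa_run sync_step c0 w c.

Lemma regular_sync_reach c : regular (sync_reach c).
Proof.
apply: (nfa_regular_seq (I := sync_init) (tr := sync_step) (F := eq c)) => w.
by split=> [[c0 init_c0 run_c0]|[c0 [c1 [init_c0 run_c0 ->]]]]; [exists c0, c | exists c0].
Qed.

Lemma sync_reach_sound c w : sync_reach c w -> exists m,
  [/\ size m = size w, sync_m c = foldl dM m0 m, sync_w c = foldl dW w0 w,
      delay (pi_i w) (pi_i m) (sync_dI c) /\ delay (pi_o w) (pi_o m) (sync_dO c) &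
      forall i, i < size w ->
        ~ stopW (foldl dW w0 (take i w)) /\ ~ stopM (foldl dM m0 (take i m))].
Proof.
elim/last_ind: w c => [|w a IH] c [c0 [m_c0 w_c0 dI_c0 dO_c0]].
  move=> /= <-; exists [::]; split=> //.
  by split; rewrite /delay ?dI_c0 ?dO_c0; case: ifP.
case/nfa_run_rcons=> c1 run_c1 [nstopM nstopW [b [m_c w_c dI_c dO_c]]].
have [m [size_m m_c1 w_c1 [DI DO] nstop]] :=
  IH c1 (ex_intro2 _ _ c0 (And4 m_c0 w_c0 dI_c0 dO_c0) run_c1).
exists (rcons m b); rewrite !size_rcons !foldl_rcons -!cats1 !pi_i_cat !pi_o_cat size_m.
split=> //; [by rewrite m_c m_c1 | by rewrite w_c w_c1 | split | ].
- exact: delay_push DI dI_c.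
- exact: delay_push DO dO_c.
move=> i; rewrite ltnS leq_eqVlt => /orP[/eqP->|lt_i].
  by rewrite !take_size_cat // -w_c1 -m_c1.
by rewrite !takel_cat ?size_m ?(ltnW lt_i) //; apply: nstop.
Qed.

Lemma sync_reach_complete w m k : k <= size w -> sem m = sem w ->
  (forall i, i < k -> ~ stopW (foldl dW w0 (take i w)) /\ ~ stopM (foldl dM m0 (take i m))) ->
  (forall i, i <= k -> lag w i <= K /\ lag m i <= K) ->
  exists c, [/\ sync_reach c (take k w), sync_m c = foldl dM m0 (take k m),
    sync_w c = foldl dW w0 (take k w),
    delay (pi_i (take k w)) (pi_i (take k m)) (sync_dI c) &
    delay (pi_o (take k w)) (pi_o (take k m)) (sync_dO c)].
Proof.
move=> + sem_mw; have size_m := sem_size sem_mw; have /semP[Ei Eo] := sem_mw.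
have pre_i n x : prefix (pi_i (take n x)) (pi_i x).
  by rewrite -{2}(cat_take_drop n x) pi_i_cat prefix_prefix.
have pre_o n x : prefix (pi_o (take n x)) (pi_o x).
  by rewrite -{2}(cat_take_drop n x) pi_o_cat prefix_prefix.
have next x n : n < size x -> exists a, take n.+1 x = take n x ++ [:: a].
  rewrite -addn1 takeD; case: (drop n x) (size_drop n x) => [|a r] /=; first lia.
  by exists a; rewrite take0.
elim: k => [|k IH] le_k_w nstop lag_le.
  pose c0 : sync_state := (m0, w0, (true, [bseq]), (true, [bseq])).
  by exists c0; rewrite !take0; split=> //; exists c0.
have [c [reach_c m_c w_c DI DO]] := IH (ltnW le_k_w) (fun i lt_i => nstop i (ltnW lt_i))
  (fun i le_i => lag_le i (leqW le_i)).
have [a Tw] := next w k le_k_w.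
have [b Tm] := next m k (leq_trans le_k_w (eq_leq (esym size_m))).
have [[bI rI] EI] : exists t, push (sync_dI c) (pi_i [:: a]) (pi_i [:: b]) = Some t.
  apply: (push_defined (u := pi_i w) DI); rewrite -pi_i_cat; first by rewrite -Tw pre_i.
  by rewrite -Tm -Ei pre_i.
have [[bO rO] EO] : exists t, push (sync_dO c) (pi_o [:: a]) (pi_o [:: b]) = Some t.
  apply: (push_defined (u := pi_o w) DO); rewrite -pi_o_cat; first by rewrite -Tw pre_o.
  by rewrite -Tm -Eo pre_o.
have DI' := delay_push DI EI; have DO' := delay_push DO EO.
rewrite -!pi_i_cat -!pi_o_cat -Tw -Tm in DI' DO'.
have [lag_w lag_m] := lag_le k.+1 (leqnn _).
have [gapI gapO] := projection_gap_le size_m lag_w lag_m.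
have sizeI : size rI <= K by rewrite (size_delay DI').
have sizeO : size rO <= K by rewrite (size_delay DO').
exists (dM (sync_m c) b, dW (sync_w c) a, (bI, Bseq sizeI), (bO, Bseq sizeO)).
rewrite /sync_m /sync_w /sync_dI /sync_dO /=.
split=> //; [|by rewrite Tm foldl_cat -m_c | by rewrite Tw foldl_cat -w_c].
have [c0 init_c0 run_c0] := reach_c; exists c0 => //.
rewrite Tw cats1; apply/nfa_run_rcons; exists c => //; split; last by exists b.
- by rewrite m_c; case: (nstop k (ltnSn k)).
- by rewrite w_c; case: (nstop k (ltnSn k)).
Qed.

End SyncRun.

Lemma regular_resolves (X : eqType) (U : seq X -> Prop) t :
  regular_seq U -> regular_seq (fun u' => exists2 u, U u & resolves t u' u).
Proof.
case: t => [[] s] regU; rewrite /resolves /=.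
  apply: eq_regular_seq (regular_lquot s regU) => u'.
  by split=> [|[u Uu ->]]; first exists (s ++ u').
apply: eq_regular_seq (regular_prefix s regU) => u'.
by split=> [[u -> Uu]|[u Uu ->]]; exists u.
Qed.

Section BoundedShiftTails.
Variables Sigma Gamma : finType.
Local Notation letter := (letter Sigma Gamma).
Local Notation word := (word Sigma Gamma).
Implicit Types (m w : word) (bs : seq (seq Sigma * seq Gamma)).

Definition blockword bs : word :=
  flatten [seq map inl b.1 ++ map inr b.2 | b <- bs].

Lemma pi_i_blockword bs : pi_i (blockword bs) = flatten (map fst bs).
Proof.
elim: bs => [|[x y] bs IH] //=; rewrite !pi_i_cat IH; congr (_ ++ _).
by rewrite -[RHS]cats0; congr (_ ++ _); [elim: x => //= a x -> | elim: y].
Qed.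

Lemma pi_o_blockword bs : pi_o (blockword bs) = flatten (map snd bs).
Proof.
elim: bs => [|[x y] bs IH] //=; rewrite !pi_o_cat IH; congr (_ ++ _).
by rewrite /= -[y]cat0s; congr (_ ++ _); [elim: x | elim: y => //= a y ->].
Qed.

Lemma shift_blockword m : exists2 bs, size bs <= (shift m).+1 & m = blockword bs.
Proof.
elim: m => [|a m [bs le_bs Em]]; first by exists [::].
rewrite shift_cons; subst m; case: a => [x|y].
  case: bs le_bs => [|[x' y'] bs] le_bs; first by exists [:: ([:: x], [::])].
  by exists ((x :: x', y') :: bs) => //; move: le_bs => /=; lia.
case: bs le_bs => [|[[|x0 x'] y'] bs] le_bs; first by exists [:: ([::], [:: y])].
  by exists (([::], y :: y') :: bs) => //; move: le_bs => /=; lia.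
by exists (([::], [:: y]) :: (x0 :: x', y') :: bs).
Qed.

Lemma blockword_of_shift_le m N :
  shift m <= N -> exists2 bs, size bs = N.+1 & m = blockword bs.
Proof.
move=> le_m_N; have [bs le_bs ->] := shift_blockword m.
exists (bs ++ nseq (N.+1 - size bs) ([::], [::])); first by rewrite size_cat size_nseq; lia.
rewrite /blockword map_cat flatten_cat.
by elim: (N.+1 - size bs) => [|k IH]; [rewrite cats0 | exact: IH].
Qed.

Lemma regular_proj (U : seq Sigma -> Prop) (V : seq Gamma -> Prop) :
  regular_seq U -> regular_seq V -> regular (fun w => U (pi_i w) /\ V (pi_o w)).
Proof.
move=> [Q1 [q1 [d1 [F1 H1]]]] [Q2 [q2 [d2 [F2 H2]]]].
pose d (q : Q1 * Q2) (a : letter) :=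
  match a with inl x => (d1 q.1 x, q.2) | inr y => (q.1, d2 q.2 y) end.
have run w s1 s2 : foldl d (s1, s2) w = (foldl d1 s1 (pi_i w), foldl d2 s2 (pi_o w)).
  by elim: w s1 s2 => [|[x|y] w IH] s1 s2 //=; rewrite IH.
exists (Q1 * Q2)%type, (q1, q2), d, (fun q => F1 q.1 && F2 q.2) => w.
by rewrite run H1 H2; split=> /andP.
Qed.

Variables (Q : finType) (d : Q -> letter -> Q) (F : pred Q).

Lemma regular_foldl_map (B : Type) (f : B -> letter) p q :
  regular_seq (fun x : seq B => foldl d p (map f x) = q).
Proof.
exists Q, p, (fun r b => d r (f b)), (pred1 q) => x.
by rewrite foldl_map; split=> [->|/eqP //]; apply: eqxx.
Qed.

(* Mezei-style decomposition: the pairs of projections of the accepted words made of [n]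
   blocks form a finite union of products of regular languages. *)
Lemma block_rectangles n : exists (I : finType) (U : Q -> I -> seq Sigma -> Prop)
    (V : Q -> I -> seq Gamma -> Prop),
  (forall p i, regular_seq (U p i) /\ regular_seq (V p i)) /\
  forall p u v, (exists bs, [/\ size bs = n, F (foldl d p (blockword bs)),
                   u = flatten (map fst bs) & v = flatten (map snd bs)]) <->
                exists i, U p i u /\ V p i v.
Proof.
elim: n => [|n [I [U [V [regUV UV]]]]].
  exists unit, (fun p _ u => F p /\ u = [::]), (fun _ _ v => v = [::]); split.
    by move=> p _; split; [apply: regular_guard => _ |]; apply: regular_word.
  move=> p u v; split=> [[bs [/size0nil -> F_p -> ->]]|[_ [[F_p ->] ->]]]; first by exists tt.
  by exists [::].
exists (Q * Q * I)%type,
  (fun p j u => exists x u1,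
     [/\ u = x ++ u1, foldl d p (map inl x) = j.1.1 & U j.1.2 j.2 u1]),
  (fun p j v => exists y v1,
     [/\ v = y ++ v1, foldl d j.1.1 (map inr y) = j.1.2 & V j.1.2 j.2 v1]).
split=> [p [[q1 q2] i]|p u v].
  by split; apply: regular_cat (regular_foldl_map _ _ _) _; case: (regUV q2 i).
split=> [[[|[x y] bs] [//= [size_bs] + -> ->]]|].
  rewrite /blockword /= !foldl_cat => F_bs.
  set q1 := foldl d p (map inl x) in F_bs; set q2 := foldl d q1 (map inr y) in F_bs.
  have [i [Ui Vi]] := (UV q2 _ _).1 (ex_intro _ bs (And4 size_bs F_bs erefl erefl)).
  exists (q1, q2, i); split; first by exists x, (flatten (map fst bs)).
  by exists y, (flatten (map snd bs)).
case=> [[[q1 q2] i] [[x [u1 [-> /= q1_x Ui]]] [y [v1 [-> /= q2_y Vi]]]]].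
have [bs [size_bs F_bs -> ->]] := (UV q2 u1 v1).2 (ex_intro _ i (conj Ui Vi)).
exists ((x, y) :: bs); split=> //=; first by rewrite size_bs.
by rewrite /blockword /= !foldl_cat q1_x q2_y.
Qed.

Lemma regular_resolved_tail p N (tI : bool * seq Sigma) (tO : bool * seq Gamma) :
  (forall m, F (foldl d p m) -> shift m <= N) ->
  regular (fun w => exists m, [/\ F (foldl d p m),
    resolves tI (pi_i w) (pi_i m) & resolves tO (pi_o w) (pi_o m)]).
Proof.
move=> shift_le; have [I [U [V [regUV UV]]]] := block_rectangles N.+1.
apply: eq_regular_seq (regular_exists (fun i => regular_proj
  (regular_resolves tI (regUV p i).1) (regular_resolves tO (regUV p i).2))) => w.
split=> [[i [[u Ui res_u] [v Vi res_v]]]|[m [F_m res_i res_o]]].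
  have [bs [_ F_bs Eu Ev]] := (UV p u v).2 (ex_intro _ i (conj Ui Vi)).
  by exists (blockword bs); rewrite pi_i_blockword pi_o_blockword -Eu -Ev.
have [bs size_bs Em] := blockword_of_shift_le (shift_le _ F_m).
have [|i [Ui Vi]] := (UV p (pi_i m) (pi_o m)).1.
  by exists bs; rewrite Em pi_i_blockword pi_o_blockword -Em.
by exists i; split; [exists (pi_i m) | exists (pi_o m)].
Qed.

End BoundedShiftTails.

Section Synchronisation.
Variables Sigma Gamma : finType.
Local Notation letter := (letter Sigma Gamma).
Local Notation word := (word Sigma Gamma).
Local Notation lang := (lang Sigma Gamma).
Implicit Types (L T : lang) (m w : word).

Definition unsynced_before T w m k :=
  forall i, i < k -> ~ regfs_residual T (take i w) /\ ~ regfs_residual T (take i m).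

Definition sync_ahead L T (strict : bool) : lang := fun w =>
  exists m, [/\ L m /\ T m, sem m = sem w & exists2 k, k <= size w &
    [/\ unsynced_before T w m k, regfs_residual T (take k m)
      & strict -> ~ regfs_residual T (take k w)]].

Definition never_synced L T : lang := fun w =>
  exists m, [/\ L m /\ T m, sem m = sem w & unsynced_before T w m (size w).+1].

Definition synced_at T w n :=
  exists2 w', T w' /\ sem w' = sem w & n <= size w /\ regfs_residual T (take n w').

(* A word of [T] whose residuals reach Reg_FS at the earliest position among all words with
   the same semantics lies in [minsync]. *)
Lemma allsyncE S T w : allsync S T w <->
  T w /\ (sync_ahead (minsync S T) T false w \/ never_synced (minsync S T) T w).
Proof.
split=> [[Tw semS]|[Tw synced]]; last first.
  by split=> //; case: synced => -[m [[[_ [semS _]] _] sem_mw _]]; rewrite -sem_mw.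
split=> //.
case: (pselect (exists n, synced_at T w n)) => [[n Pn]|noP].
  have [k [[m [Tm sem_mw] [le_k reg_m]] min_k]] := ex_minn_prop Pn.
  have Mm : minsync S T m.
    split=> //; split; first by rewrite sem_mw.
    move=> w' Tw' sem_w' i le_i reg_w'; apply: regfs_residual_take reg_m.
    by apply: min_k; exists w'; [rewrite sem_w' | rewrite -(sem_size sem_mw)].
  left; exists m; split=> //; exists k => //; split=> // i lt_ik.
  have nP : ~ synced_at T w i by move=> /min_k; rewrite leqNgt lt_ik.
  by split=> reg_i; apply: nP; [exists w | exists m]; rewrite // (leq_trans (ltnW lt_ik)).
have nreg x : T x -> sem x = sem w -> forall i, i <= size w -> ~ regfs_residual T (take i x).
  by move=> Tx sem_x i le_i reg_x; apply: noP; exists i, x.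
right; exists w; split=> //; last by move=> i /nreg nreg_i; split; apply: nreg_i.
do 3!split=> //; move=> w' Tw' sem_w' i le_i reg_w'.
by case: (nreg w' Tw' sem_w' i le_i).
Qed.

Lemma minsyncE S T w : minsync S T w <-> allsync S T w /\ ~ sync_ahead T T true w.
Proof.
split=> [[Tw [semS min_w]]|[[Tw semS] not_ahead]].
  split=> // -[m [[_ Tm] sem_mw [k le_k [_ reg_m nreg_w]]]].
  exact: nreg_w isT (min_w m Tm sem_mw k le_k reg_m).
split=> //; split=> // w' Tw' sem_w' i le_i reg_w'; apply: contrapT => nreg_w.
have [k [[le_k reg_k] min_k]] :=
  ex_minn_prop (P := fun n => n <= size w /\ regfs_residual T (take n w')) (conj le_i reg_w').
have le_ki : k <= i := min_k i (conj le_i reg_w').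
have nreg j : j <= i -> ~ regfs_residual T (take j w) by move=> le_j /(regfs_residual_take le_j).
apply: not_ahead; exists w'; split=> //; exists k => //; split=> // [j lt_jk|_]; last exact: nreg.
split; first by apply: nreg; apply: leq_trans (ltnW lt_jk) le_ki.
move=> reg_j; suff: k <= j by rewrite leqNgt lt_jk.
by apply: min_k; split=> //; apply: leq_trans (ltnW lt_jk) le_k.
Qed.

Section RegularSync.
Variables (L T : lang).
Variables (QL : finType) (l0 : QL) (dL : QL -> letter -> QL) (FL : pred QL).
Hypothesis HL : forall w, L w <-> FL (foldl dL l0 w).
Variables (QT : finType) (t0 : QT) (dT : QT -> letter -> QT) (FT : pred QT).
Hypothesis HT : forall w, T w <-> FT (foldl dT t0 w).
Variable N : nat.
Hypothesis shiftlag_le : forall w n, T w -> has_shiftlag w n -> n <= N.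

Local Notation fs := (finite_shift_from dT FT).
Local Notation dLT := (fun (q : QL * QT) a => (dL q.1 a, dT q.2 a)).
Local Notation FLT := (fun q : QL * QT => FL q.1 && FT q.2).
(* Before synchronisation lags are at most [#|QT|] ([imbalance_le_card]), so the delays
   between projections fit in buffers of size [#|QT|.+1]. *)
Local Notation K := #|QT|.+1.
Local Notation reach := (sync_reach (l0, t0) dLT (fun q => fs q.2) t0 dT fs (K := K)).
Local Notation state := (sync_state Sigma Gamma (QL * QT)%type QT K).

Definition sync_tail (c : state) : lang := fun v =>
  exists m, [/\ FLT (foldl dLT (sync_m c) m),
    resolves (sync_dI c) (pi_i v) (pi_i m) & resolves (sync_dO c) (pi_o v) (pi_o m)].

Lemma regular_sync_tail c : fs (sync_m c).2 -> regular (sync_tail c).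
Proof.
move=> [M shift_le]; apply: (regular_resolved_tail (N := M)) => m.
by case: (sync_m c) shift_le => ql qt shift_le; rewrite foldl_pair => /andP[_ /shift_le].
Qed.

Lemma unsynced_lag_le w m k :
  unsynced_before T w m k -> forall i, i <= k -> lag w i <= K /\ lag m i <= K.
Proof.
have shiftlag_le' x n : FT (foldl dT t0 x) -> has_shiftlag x n -> n <= N.
  by move=> /HT; apply: shiftlag_le.
have lag_le x i : ~ regfs_residual T (take i x) -> lag x i <= #|QT|.
  by rewrite (regfs_residualE HT) => /(imbalance_le_card shiftlag_le').
move=> unsync i; rewrite leq_eqVlt => /orP[/eqP->|/unsync[/lag_le ? /lag_le ?]]; last first.
  by split; apply: leqW.
case: k unsync => [|k] unsync; first by rewrite /lag !take0.
have [/lag_le lag_w /lag_le lag_m] := unsync k (ltnSn k).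
by split; apply: leq_trans (lag_succ _ _) _.
Qed.

Lemma reach_complete w m k : k <= size w -> sem m = sem w -> unsynced_before T w m k ->
  exists c : state, [/\ reach c (take k w),
    sync_m c = (foldl dL l0 (take k m), foldl dT t0 (take k m)),
    sync_w c = foldl dT t0 (take k w),
    delay (pi_i (take k w)) (pi_i (take k m)) (sync_dI c) &
    delay (pi_o (take k w)) (pi_o (take k m)) (sync_dO c)].
Proof.
move=> le_k sem_mw unsync; rewrite -foldl_pair.
apply: sync_reach_complete le_k sem_mw _ (unsynced_lag_le unsync) => i /unsync[nreg_w nreg_m].
by rewrite foldl_pair; split=> /(regfs_residualE HT).
Qed.

Lemma reach_sound c u : reach c u -> exists mu, [/\ size mu = size u,
    sync_m c = (foldl dL l0 mu, foldl dT t0 mu), sync_w c = foldl dT t0 u,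
    delay (pi_i u) (pi_i mu) (sync_dI c) /\ delay (pi_o u) (pi_o mu) (sync_dO c) &
    unsynced_before T u mu (size u)].
Proof.
case/sync_reach_sound=> mu [size_mu m_c w_c D nstop].
exists mu; split=> //; first by rewrite m_c foldl_pair.
by move=> i /nstop[]; rewrite foldl_pair /= => nstop_u nstop_mu; split=> /(regfs_residualE HT).
Qed.

Lemma sync_aheadE strict w : sync_ahead L T strict w <-> exists c : state,
  (fs (sync_m c).2 /\ (strict -> ~ fs (sync_w c))) /\
  exists u v, [/\ w = u ++ v, reach c u & sync_tail c v].
Proof.
have fsE := regfs_residualE HT; split.
  case=> m [[Lm Tm] sem_mw [k le_k [unsync reg_m nreg_w]]]; have /semP[Ei Eo] := sem_mw.
  have [c [reach_c m_c w_c DI DO]] := reach_complete le_k sem_mw unsync.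
  exists c; split; first split.
  - by rewrite m_c; apply/fsE.
  - by move=> /nreg_w nreg_k; rewrite w_c => /fsE.
  exists (take k w), (drop k w); split; rewrite ?cat_take_drop //.
  exists (drop k m); split.
  - rewrite m_c foldl_pair /= -!foldl_cat cat_take_drop.
    by apply/andP; split; [apply/HL | apply/HT].
  - by apply/(delay_resolves _ _ DI); rewrite -!pi_i_cat !cat_take_drop.
  - by apply/(delay_resolves _ _ DO); rewrite -!pi_o_cat !cat_take_drop.
case=> c [[fs_c nfs_w] [u [v [-> reach_c [m2 [F_m2 res_i res_o]]]]]].
have [mu [size_mu m_c w_c [DI DO] unsync]] := reach_sound reach_c.
rewrite m_c foldl_pair /= -!foldl_cat in F_m2; case/andP: F_m2 => /HL L_m /HT T_m.
exists (mu ++ m2); split=> //.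
  by apply/semP; rewrite !pi_i_cat !pi_o_cat; split; apply/esym;
    [apply/(delay_resolves _ _ DI) | apply/(delay_resolves _ _ DO)].
exists (size u); first by rewrite size_cat leq_addr.
rewrite !take_size_cat //; split.
- by move=> i lt_i; rewrite !takel_cat ?size_mu ?(ltnW lt_i) //; apply: unsync.
- by apply/fsE; rewrite m_c in fs_c.
- by move=> /nfs_w nfs /fsE; rewrite -w_c.
Qed.

Lemma never_syncedE w : never_synced L T w <-> exists c : state,
  [/\ (sync_dI c).2 = [::], (sync_dO c).2 = [::], FLT (sync_m c), ~ fs (sync_m c).2
    & ~ fs (sync_w c)] /\ reach c w.
Proof.
have fsE := regfs_residualE HT; split.
  case=> m [[Lm Tm] sem_mw unsync]; have /semP[Ei Eo] := sem_mw.
  have take_m : take (size w) m = m by rewrite -(sem_size sem_mw) take_size.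
  have [c [reach_c m_c w_c DI DO]] :=
    reach_complete (leqnn (size w)) sem_mw (fun i lt_i => unsync i (ltnW lt_i)).
  have [nreg_w nreg_m] := unsync (size w) (ltnSn _).
  rewrite take_size take_m in reach_c m_c w_c DI DO nreg_w nreg_m.
  exists c; split=> //; split.
  - by apply/size0nil; rewrite (size_delay DI) Ei /absdiff subnn.
  - by apply/size0nil; rewrite (size_delay DO) Eo /absdiff subnn.
  - by rewrite m_c /=; apply/andP; split; [apply/HL | apply/HT].
  - by rewrite m_c => /fsE.
  - by rewrite w_c => /fsE.
case=> c [[nilI nilO F_c nfs_m nfs_w] reach_c].
have [mu [size_mu m_c w_c [DI DO] unsync]] := reach_sound reach_c.
rewrite m_c /= in F_c nfs_m; case/andP: F_c => /HL L_mu /HT T_mu.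
exists mu; split=> //.
  by apply/semP; split; apply/esym; [apply: delay_nil DI | apply: delay_nil DO].
move=> i; rewrite ltnS leq_eqVlt => /orP[/eqP->|/unsync //].
by rewrite -{2}size_mu !take_size; split=> /fsE; [rewrite -w_c | ].
Qed.

Lemma regular_sync_ahead strict : regular (sync_ahead L T strict).
Proof.
apply: eq_regular_seq (fun w => iff_sym (sync_aheadE strict w)) _.
apply: regular_exists => c; apply: regular_guard => -[fs_c _].
by apply: regular_cat; [apply: regular_sync_reach | apply: regular_sync_tail].
Qed.

Lemma regular_never_synced : regular (never_synced L T).
Proof.
apply: eq_regular_seq (fun w => iff_sym (never_syncedE w)) _.
by apply: regular_exists => c; apply: regular_guard => _; apply: regular_sync_reach.
Qed.

End RegularSync.
End Synchronisation.

Theorem mainTheorem16 (Sigma Gamma : finType) (S T : lang Sigma Gamma) :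
  regular S -> regular T -> finite_shiftlag S -> finite_shiftlag T ->
  (regular (minsync S T) <-> regular (allsync S T)).
Proof.
move=> _ regT _ [N shiftlag_le]; have [QT [t0 [dT [FT HT]]]] := regT.
split=> [[QL [l0 [dL [FL HL]]]]|reg_all].
  apply: eq_regular_seq (fun w => iff_sym (allsyncE S T w)) _.
  apply: regularI regT (regularU _ _).
    exact: (regular_sync_ahead HL HT shiftlag_le false).
  exact: (regular_never_synced HL HT shiftlag_le).
apply: eq_regular_seq (fun w => iff_sym (minsyncE S T w)) _.
exact: regularI reg_all (regularC (regular_sync_ahead HT HT shiftlag_le true)).
Qed.
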